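(* (i) The solutions $(p,m)\in\mathbb{Z}_{\ge0}\times\mathbb{Z}_{>0}$ of $p^2-mp+\frac{m(m-1)}{6}=0$ with $p\le[\frac m2]$ are precisely the pairs $(p_i,m_i)$, $i\ge1$, defined by $(p_1,m_1)=(0,1)$, $p_{i+1}=m_i-p_i$, $m_{i+1}=5m_i-6p_i+1$. (ii) The solutions $(q,n)\in\mathbb{Z}_{\ge0}\times\mathbb{Z}_{>0}$ of $q^2-2nq+\frac{n(2n-1)}{3}=0$ with $q\le n$ are precisely the pairs $(q_i,n_i)$, $i\ge1$, defined by $(q_1,n_1)=(1,3)$, $q_{i+1}=8n_i-5q_i+1$, $n_{i+1}=19n_i-12q_i+3$. *)

From mathcomp Require Import all_boot all_order all_algebra.
Set Implicit Arguments. Unset Strict Implicit. Unset Printing Implicit Defensive.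
Import Order.TTheory GRing.Theory Num.Theory.
Local Open Scope ring_scope.

(* (p_i, m_i) for i >= 1; index 0 is an unused dummy value. *)
Fixpoint pm_seq (i : nat) : int * int :=
  match i with
  | 0%N => (0, 1)
  | i'.+1 =>
    match i' with
    | 0%N => (0, 1)
    | _ => let (p, m) := pm_seq i' in (m - p, 5 * m - 6 * p + 1)
    end
  end.

(* (q_i, n_i) for i >= 1; index 0 is an unused dummy value. *)
Fixpoint qn_seq (i : nat) : int * int :=
  match i with
  | 0%N => (1, 3)
  | i'.+1 =>
    match i' with
    | 0%N => (1, 3)
    | _ => let (q, n) := qn_seq i' in (8 * n - 5 * q + 1, 19 * n - 12 * q + 3)
    end
  end.

(* Both equations are invariant under Vieta jumping: the affine map
   (p, m) |-> (m - p, 5m - 6p + 1), resp. (q, n) |-> (8n - 5q + 1, 19n - 12q + 3),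
   preserves the quadratic form and the side conditions, and its inverse sends
   every solution other than (0, 1), resp. (1, 3), to a solution with smaller
   m, resp. n.  Descent on m, resp. n, then puts every solution on the forward
   orbit of the base solution. *)

From mathcomp Require Import all_boot all_order all_algebra.
From mathcomp Require Import zify ring.

Set Implicit Arguments.
Unset Strict Implicit.
Unset Printing Implicit Defensive.
Import Order.TTheory GRing.Theory Num.Theory.
Local Open Scope ring_scope.

Section Descent.

Variables (T : eqType) (P : T -> Prop) (f : T -> T) (x0 : T) (measure : T -> nat).
Hypothesis P_x0 : P x0.
Hypothesis P_f : forall x, P x -> P (f x).
Hypothesis P_descent : forall x, P x -> x != x0 ->
  exists y, [/\ P y, f y = x & (measure y < measure x)%N].

Lemma iter_orbitP x : P x <-> exists i, x = iter i f x0.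
Proof.
split; last by case=> i ->; elim: i => //= i; exact: P_f.
have [n] := ubnP (measure x); elim: n x => // n IHn x /ltnSE lt_xn Px.
have [-> | ne_x] := eqVneq x x0; first by exists 0%N.
have [y [Py fy_x lt_yx]] := P_descent Px ne_x.
have [i y_i] := IHn y (leq_trans lt_yx lt_xn) Py.
by exists i.+1; rewrite -fy_x y_i.
Qed.

End Descent.

Lemma iter_orbit_seqP (T : Type) (s : nat -> T) (f : T -> T) x :
  (forall i, s i.+1 = iter i f (s 1%N)) ->
  (exists i, (1 <= i)%N /\ x = s i) <-> exists i, x = iter i f (s 1%N).
Proof.
move=> s_iter; split=> [[[|i] [// _ ->]] | [i ->]]; first by exists i.
by exists i.+1; rewrite s_iter.
Qed.

Lemma intr_div_eq0 (F : numFieldType) (z : int) (k : nat) : k != 0%N ->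
  (z%:~R : F) / k%:R = 0 <-> z = 0.
Proof.
move=> k0; split=> [/eqP | ->]; last by rewrite mul0r.
by rewrite mulf_eq0 invr_eq0 pnatr_eq0 (negPf k0) orbF intr_eq0 => /eqP.
Qed.

Definition pm_form (x : int * int) : int :=
  6 * x.1 ^+ 2 - 6 * x.2 * x.1 + x.2 * (x.2 - 1).
Definition pm_sol (x : int * int) : Prop :=
  [/\ 0 <= x.1, 0 < x.2, pm_form x = 0 & 2 * x.1 <= x.2].
Definition pm_step (x : int * int) : int * int :=
  (x.2 - x.1, 5 * x.2 - 6 * x.1 + 1).
Definition pm_unstep (x : int * int) : int * int :=
  (5 * x.1 + 1 - x.2, 6 * x.1 + 1 - x.2).

Lemma pm_rat_eq0 (F : numFieldType) (p m : int) :
  (p%:~R : F) ^+ 2 - m%:~R * p%:~R + m%:~R * (m%:~R - 1) / 6 = 0 <-> pm_form (p, m) = 0.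
Proof.
have -> : (p%:~R : F) ^+ 2 - m%:~R * p%:~R + m%:~R * (m%:~R - 1) / 6
          = (pm_form (p, m))%:~R / 6%:R.
  by rewrite /pm_form !(rmorphB, rmorphD, rmorphM, rmorphXn, rmorph1) /=; field.
exact: intr_div_eq0.
Qed.

Lemma pm_seq_iter i : pm_seq i.+1 = iter i pm_step (0, 1).
Proof.
elim: i => // i IHi.
rewrite -[pm_seq i.+2]/(let (p, m) := pm_seq i.+1 in (m - p, 5 * m - 6 * p + 1)).
by rewrite iterS -IHi; case: pm_seq.
Qed.

Lemma pm_form_step x : pm_form (pm_step x) = pm_form x.
Proof. by rewrite /pm_form /=; ring. Qed.

Lemma pm_unstepK : cancel pm_unstep pm_step.
Proof. by case=> p m; rewrite /pm_step /=; congr pair; ring. Qed.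

Lemma pm_sol_step x : pm_sol x -> pm_sol (pm_step x).
Proof. by case: x => p m [/= *]; split; rewrite ?pm_form_step //=; lia. Qed.

Lemma pm_sol_bounds p m : pm_sol (p, m) -> 2 <= m ->
  [/\ 0 < p, 4 * p + 1 <= m & m <= 5 * p + 1].
Proof. by rewrite /pm_sol /pm_form => -[/= *]; split; nia. Qed.

Lemma pm_sol_unstep x : pm_sol x -> x != (0, 1) ->
  pm_sol (pm_unstep x) /\ (pm_unstep x).2 < x.2.
Proof.
case: x => p m sol_pm ne01; have [/= p_ge0 m_gt0 eq0 le_pm] := sol_pm.
have m_ge2 : 2 <= m.
  rewrite leNgt; apply: contra ne01 => m_le1.
  have m1 : m = 1 by lia.
  by move: eq0 le_pm; rewrite /pm_form m1 /= => *; apply/eqP; congr pair; nia.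
have [p_gt0 lb_m ub_m] := pm_sol_bounds sol_pm m_ge2.
rewrite -(pm_unstepK (p, m)) pm_form_step in eq0.
by rewrite /pm_unstep /=; split; first split; rewrite //=; lia.
Qed.

Lemma pm_solP x : pm_sol x <-> exists i, (1 <= i)%N /\ x = pm_seq i.
Proof.
apply: (iff_trans _ (iff_sym (iter_orbit_seqP x pm_seq_iter))).
apply: (iter_orbitP (measure := fun x => absz x.2)) => [|{}x|{}x sol_x ne_x].
- by split=> //=; lia.
- exact: pm_sol_step.
have [sol_y lt_yx] := pm_sol_unstep sol_x ne_x.
exists (pm_unstep x); split=> //; first exact: pm_unstepK.
by case: sol_y => _; move: lt_yx => /= *; lia.
Qed.

Definition qn_form (x : int * int) : int :=
  3 * x.1 ^+ 2 - 6 * x.2 * x.1 + x.2 * (2 * x.2 - 1).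
Definition qn_sol (x : int * int) : Prop :=
  [/\ 0 <= x.1, 0 < x.2, qn_form x = 0 & x.1 <= x.2].
Definition qn_step (x : int * int) : int * int :=
  (8 * x.2 - 5 * x.1 + 1, 19 * x.2 - 12 * x.1 + 3).
Definition qn_unstep (x : int * int) : int * int :=
  (19 * x.1 - 8 * x.2 + 5, 12 * x.1 - 5 * x.2 + 3).

Lemma qn_unstep_gt0 q n : qn_sol (q, n) -> (q, n) != (1, 3) -> 5 * n <= 12 * q + 2.
Proof.
case=> /= q_ge0 n_gt0 eq0 le_qn; apply: contraR; rewrite -ltNge => lt_n.
set k := 5 * n - 12 * q - 3.
have k_ge0 : 0 <= k by rewrite /k; lia.
(* 25 times the form, as a sum of terms that are nonnegative once k >= 0 *)
have sos : 3 * (q - 1) ^+ 2 + k * (18 * q + 7) + 2 * k ^+ 2 = 0.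
  by rewrite -(mulr0 25) -eq0 /qn_form /k; ring.
have sq_ge0 := sqr_ge0 (q - 1); have sk_ge0 := sqr_ge0 k.
have lin_ge0 : 0 <= k * (18 * q + 7) by apply: mulr_ge0 => //; lia.
have q1 : q = 1 by nia.
have k0 : k = 0 by nia.
by apply/eqP; congr pair; move: k0; rewrite /k; lia.
Qed.

Lemma qn_rat_eq0 (F : numFieldType) (q n : int) :
  (q%:~R : F) ^+ 2 - 2 * n%:~R * q%:~R + n%:~R * (2 * n%:~R - 1) / 3 = 0
  <-> qn_form (q, n) = 0.
Proof.
have -> : (q%:~R : F) ^+ 2 - 2 * n%:~R * q%:~R + n%:~R * (2 * n%:~R - 1) / 3
          = (qn_form (q, n))%:~R / 3%:R.
  by rewrite /qn_form !(rmorphB, rmorphD, rmorphM, rmorphXn, rmorph1) /=; field.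
exact: intr_div_eq0.
Qed.

Lemma qn_seq_iter i : qn_seq i.+1 = iter i qn_step (1, 3).
Proof.
elim: i => // i IHi.
rewrite -[qn_seq i.+2]/(let (q, n) := qn_seq i.+1 in
                        (8 * n - 5 * q + 1, 19 * n - 12 * q + 3)).
by rewrite iterS -IHi; case: qn_seq.
Qed.

Lemma qn_form_step x : qn_form (qn_step x) = qn_form x.
Proof. by rewrite /qn_form /=; ring. Qed.

Lemma qn_unstepK : cancel qn_unstep qn_step.
Proof. by case=> q n; rewrite /qn_step /=; congr pair; ring. Qed.

Lemma qn_sol_step x : qn_sol x -> qn_sol (qn_step x).
Proof. by case: x => q n [/= *]; split; rewrite ?qn_form_step //=; lia. Qed.

Lemma qn_sol_bounds q n : qn_sol (q, n) ->
  [/\ 8 * n <= 19 * q + 5, 2 * q + 1 <= n & 7 * q + 2 <= 3 * n].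
Proof. by rewrite /qn_sol /qn_form => -[/= *]; split; nia. Qed.

Lemma qn_sol_unstep x : qn_sol x -> x != (1, 3) ->
  qn_sol (qn_unstep x) /\ (qn_unstep x).2 < x.2.
Proof.
case: x => q n sol_qn ne13; have [/= q_ge0 n_gt0 eq0 le_qn] := sol_qn.
have n_ub := qn_unstep_gt0 sol_qn ne13.
have [lb_q lb_n ub_q] := qn_sol_bounds sol_qn.
rewrite -(qn_unstepK (q, n)) qn_form_step in eq0.
by rewrite /qn_unstep /=; split; first split; rewrite //=; lia.
Qed.

Lemma qn_solP x : qn_sol x <-> exists i, (1 <= i)%N /\ x = qn_seq i.
Proof.
apply: (iff_trans _ (iff_sym (iter_orbit_seqP x qn_seq_iter))).
apply: (iter_orbitP (measure := fun x => absz x.2)) => [|{}x|{}x sol_x ne_x].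
- by split=> //=; lia.
- exact: qn_sol_step.
have [sol_y lt_yx] := qn_sol_unstep sol_x ne_x.
exists (qn_unstep x); split=> //; first exact: qn_unstepK.
by case: sol_y => _; move: lt_yx => /= *; lia.
Qed.

Theorem lemma3p5 :
  (forall p m : int,
     (0 <= p /\ 0 < m /\
      (p%:~R : rat) ^+ 2 - m%:~R * p%:~R + m%:~R * (m%:~R - 1) / 6 = 0 /\
      p <= (m %/ 2)%Z)
     <-> exists i : nat, (1 <= i)%N /\ (p, m) = pm_seq i)
  /\
  (forall q n : int,
     (0 <= q /\ 0 < n /\
      (q%:~R : rat) ^+ 2 - 2 * n%:~R * q%:~R + n%:~R * (2 * n%:~R - 1) / 3 = 0 /\
      q <= n)
     <-> exists i : nat, (1 <= i)%N /\ (q, n) = qn_seq i).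
Proof.
split=> [p m | q n].
  rewrite -pm_solP lez_divRL // [p * 2]mulrC.
  by split=> [[p_ge0 [m_gt0 [/pm_rat_eq0 eq0 le_pm]]]
             | [p_ge0 m_gt0 /(pm_rat_eq0 rat) eq0 le_pm]]; do ?split.
rewrite -qn_solP.
by split=> [[q_ge0 [n_gt0 [/qn_rat_eq0 eq0 le_qn]]]
           | [q_ge0 n_gt0 /(qn_rat_eq0 rat) eq0 le_qn]]; do ?split.
Qed.
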